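(* Let $A$ be a commutative Rickart C*-algebra. Then the lattice $L_A$ has a pseudocomplement, given by $\neg D(a)=D([a=0])$ for $a\in A^+$, where $[a=0]$ is the projection $p$ with $ap=0$ such that $ab=0$ implies $b=bp$.
   Context: For self-adjoint $a,b\in A$, $a\preccurlyeq b$ means $a\le nb^+$ for some $n\in\mathbb{N}$, and $a\approx b$ means $a\preccurlyeq b$ and $b\preccurlyeq a$. $L_A=A^+/\approx$ (with $A^+$ the positive cone), $D(a)$ is the class of $a$, ordered by $D(a)\le D(b)$ iff $a\preccurlyeq b$; it is a distributive lattice with $D(a)\wedge D(b)=D(ab)$, $D(a)\vee D(b)=D(a+b)$ for $a,b\ge 0$, bottom $D(0)$, top $D(1)$. A pseudocomplement on a distributive lattice $L$ is an antitone map $\neg:L\to L$ with $x\wedge y=0$ iff $x\le\neg y$. A commutative unital C*-algebra is Rickart if for each $x$ there is a projection $p$ with $\{y\mid xy=0\}=pA$. *)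

From HB Require Import structures.
From mathcomp Require Import all_boot all_order all_algebra.
From mathcomp Require Import complex.
From mathcomp Require Import reals.
Set Implicit Arguments. Unset Strict Implicit. Unset Printing Implicit Defensive.
Import Order.TTheory GRing.Theory Num.Theory.
Local Open Scope ring_scope.

Record comCStarAlg (R : realType) (A : comAlgType R[i]) := {
  cstar : A -> A;
  cnorm : A -> R;
  cstar_add : forall x y : A, cstar (x + y) = cstar x + cstar y;
  cstar_scale : forall (l : R[i]) (x : A), cstar (l *: x) = (conjc l) *: cstar x;
  cstar_mul : forall x y : A, cstar (x * y) = cstar y * cstar x;
  cstarK : forall x : A, cstar (cstar x) = x;
  cnorm_ge0 : forall x : A, 0 <= cnorm x;
  cnorm_eq0 : forall x : A, cnorm x = 0 -> x = 0;
  cnorm_triangle : forall x y : A, cnorm (x + y) <= cnorm x + cnorm y;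
  cnorm_scale : forall (l : R[i]) (x : A), cnorm (l *: x) = Normc.normc l * cnorm x;
  cnorm_mul : forall x y : A, cnorm (x * y) <= cnorm x * cnorm y;
  cnorm_cstar : forall x : A, cnorm (cstar x * x) = cnorm x ^+ 2;
  cnorm_complete : forall u : nat -> A,
    (forall e : R, 0 < e -> exists N : nat, forall m n : nat,
        (N <= m)%N -> (N <= n)%N -> cnorm (u m - u n) < e) ->
    exists l : A, forall e : R, 0 < e -> exists N : nat, forall n : nat,
        (N <= n)%N -> cnorm (u n - l) < e
}.

Section CStar.
Variables (R : realType) (A : comAlgType R[i]) (C : comCStarAlg A).

Definition self_adjoint (a : A) : Prop := cstar C a = a.

Definition positive (a : A) : Prop := exists x : A, a = cstar C x * x.

Definition cle (a b : A) : Prop := positive (b - a).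

Definition projection (p : A) : Prop := p * p = p /\ cstar C p = p.

Definition rickart : Prop :=
  forall x : A, exists p : A, projection p /\
    forall y : A, x * y = 0 <-> exists z : A, y = p * z.

(* a ≼ b for positive a b (then b^+ = b): a <= n b for some n *)
Definition prec (a b : A) : Prop := exists n : nat, cle a (b *+ n).

Definition zero_proj (a p : A) : Prop :=
  projection p /\ a * p = 0 /\ forall b : A, a * b = 0 -> b = b * p.

End CStar.

From HB Require Import structures.
From mathcomp Require Import all_boot all_order all_algebra.
From mathcomp Require Import complex.
From mathcomp Require Import reals ring lra.
Set Implicit Arguments. Unset Strict Implicit. Unset Printing Implicit Defensive.
Import Order.TTheory GRing.Theory Num.Theory.
Local Open Scope ring_scope.

(* Everything reduces to two properties of the cone [A^+ = {x^* x}]: it is proper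
   ([a >= 0 >= a] forces [a = 0]) and every [b >= 0] is bounded by a scalar [n].  Both come
   from square roots: for self-adjoint [u] with [|u| < 1], [1 - u = (1 - l)^2] where [l] is the
   fixed point of the contraction [l |-> (u + l^2)/2].  Properness uses the norm picture of
   positivity, [|T - h| <= T], which is closed under sums and holds for squares, hence for
   [x^* x = Re(x)^2 + Im(x)^2].  Then [b a <= 0] forces [b a = 0], so [b = b [a=0] <= n [a=0]];
   conversely [b <= n [a=0]] gives [- b a = (n [a=0] - b) a >= 0]. *)

Section RealSequences.
Variable R : realType.

Lemma bernoulli_ler (d : R) (n : nat) : 0 <= d -> 1 + n%:R * d <= (1 + d) ^+ n.
Proof.
move=> d_ge0; elim: n => [|n IHn]; first by rewrite mul0r addr0 expr0.
rewrite exprS -natr1 mulrDl mul1r addrA.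
apply: (le_trans (y := (1 + d) * (1 + n%:R * d))).
  have : 0 <= n%:R * d * d by rewrite !mulr_ge0.
  nra.
by rewrite ler_pM2l //; lra.
Qed.

Lemma geometric_lt (r K e : R) :
  0 <= r -> r < 1 -> 0 <= K -> 0 < e -> exists N : nat, K * r ^+ N < e.
Proof.
move=> r_ge0 r_lt1 K_ge0 e_gt0.
have [->|r_neq0] := eqVneq r 0; first by exists 1%N; rewrite expr1 mulr0.
have r_gt0 : 0 < r by rewrite lt_def r_neq0.
set d := r^-1 - 1.
have d_gt0 : 0 < d by rewrite subr_gt0 invf_gt1.
set N := Num.bound (K / (e * d)).
have K_lt : K < N%:R * d * e.
  rewrite -mulrA (mulrC d) -ltr_pdivrMr ?mulr_gt0 //.
  by apply: archi_boundP; rewrite divr_ge0 // ltW ?mulr_gt0.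
have Nd_gt0 : 0 < N%:R * d by rewrite -(pmulr_lgt0 _ e_gt0); apply: le_lt_trans K_lt.
(* Bernoulli's inequality for [r^-1 = 1 + d] gives [r^N (1 + N d) <= 1]. *)
have rN_le : r ^+ N * (N%:R * d) <= 1.
  have rN_gt0 : 0 < r ^+ N by rewrite exprn_gt0.
  have := bernoulli_ler N (ltW d_gt0).
  rewrite subrKC exprVn -(ler_pM2l rN_gt0) mulfV ?gt_eqF // mulrDr mulr1.
  by apply: le_trans; rewrite lerDr ltW.
exists N; rewrite -(ltr_pM2r Nd_gt0) -mulrA (mulrC e).
apply: le_lt_trans K_lt; exact: ler_piMr.
Qed.

End RealSequences.

Section CStar.
Variables (R : realType) (A : comAlgType R[i]) (C : comCStarAlg A).
Local Notation star := (cstar C).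
Local Notation nrm := (cnorm C).

Definition rscale (r : R) (x : A) : A := r%:C%C *: x.

Lemma rscaleA a b x : rscale a (rscale b x) = rscale (a * b) x.
Proof. by rewrite /rscale scalerA rmorphM. Qed.

Lemma rscale1 x : rscale 1 x = x.
Proof. by rewrite /rscale rmorph1 scale1r. Qed.

Lemma rscaleKV (a : R) x : a != 0 -> rscale a (rscale a^-1 x) = x.
Proof. by move=> a_neq0; rewrite rscaleA divff // rscale1. Qed.

Lemma rscaleDl a b x : rscale (a + b) x = rscale a x + rscale b x.
Proof. by rewrite /rscale rmorphD scalerDl. Qed.

Lemma rscaleDr a x y : rscale a (x + y) = rscale a x + rscale a y.
Proof. by rewrite /rscale scalerDr. Qed.

Lemma rscaleBr a x y : rscale a (x - y) = rscale a x - rscale a y.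
Proof. by rewrite /rscale scalerBr. Qed.

Lemma rscaleMM a b x y : rscale a x * rscale b y = rscale (a * b) (x * y).
Proof. by rewrite /rscale -scalerAl -scalerAr scalerA rmorphM. Qed.

Lemma rscale_nat (n : nat) x : rscale n%:R x = x *+ n.
Proof. by rewrite /rscale rmorph_nat scaler_nat. Qed.

Lemma star0 : star 0 = 0.
Proof. by apply: (addrI (star 0)); rewrite -(cstar_add C) !addr0. Qed.

Lemma starN x : star (- x) = - star x.
Proof. by apply: (addrI (star x)); rewrite -(cstar_add C) !subrr star0. Qed.

Lemma starB x y : star (x - y) = star x - star y.
Proof. by rewrite (cstar_add C) starN. Qed.

Lemma star1 : star 1 = 1.
Proof. by have := cstar_mul C (star 1) 1; rewrite mulr1 !(cstarK C) mulr1. Qed.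

Lemma starM x y : star (x * y) = star x * star y.
Proof. by rewrite (cstar_mul C) mulrC. Qed.

Lemma star_rscale r x : star (rscale r x) = rscale r (star x).
Proof. by rewrite /rscale (cstar_scale C) conjc_real. Qed.

Lemma normc_real (r : R) : Normc.normc r%:C%C = `|r|.
Proof. by rewrite /= expr0n /= addr0 sqrtr_sqr. Qed.

Lemma cnorm0 : nrm 0 = 0.
Proof. by have := cnorm_scale C 0 0; rewrite scale0r Normc.normc0 mul0r. Qed.

Lemma cnormN x : nrm (- x) = nrm x.
Proof. by rewrite -scaleN1r (cnorm_scale C) normcN Normc.normc1 mul1r. Qed.

Lemma cnorm_distC x y : nrm (x - y) = nrm (y - x).
Proof. by rewrite -opprB cnormN. Qed.

Lemma cnorm_dist_triangle x y z : nrm (x - z) <= nrm (x - y) + nrm (y - z).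
Proof. by have := cnorm_triangle C (x - y) (y - z); rewrite addrA addrNK. Qed.

Lemma cnorm_rscale r x : nrm (rscale r x) = `|r| * nrm x.
Proof. by rewrite /rscale (cnorm_scale C) normc_real. Qed.

(* The C*-identity [|x^* x| = |x|^2] together with submultiplicativity gives [|x| <= |x^*|]. *)
Lemma cnorm_star x : nrm (star x) = nrm x.
Proof.
have le_star y : nrm y <= nrm (star y).
  have := cnorm_mul C (star y) y; rewrite (cnorm_cstar C) expr2.
  have [->|y_neq0] := eqVneq (nrm y) 0; first by rewrite (cnorm_ge0 C).
  by rewrite ler_pM2r // lt_def y_neq0 (cnorm_ge0 C).
by apply/eqP; rewrite eq_le le_star -{2}(cstarK C x) le_star.
Qed.

Lemma cnorm1_le1 : nrm 1 <= 1.
Proof.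
have := cnorm_cstar C 1; rewrite star1 mul1r expr2.
have [->|n1_neq0] := eqVneq (nrm 1) 0; first by rewrite ler01.
by rewrite -{1}[nrm 1]mul1r => /mulIf ->.
Qed.

Lemma cnorm_rscale1 a : nrm (rscale a 1) <= `|a|.
Proof. by rewrite cnorm_rscale ler_piMr // cnorm1_le1. Qed.

Lemma cnorm_small_eq0 x : (forall e : R, 0 < e -> nrm x <= e) -> x = 0.
Proof.
move=> small; apply: (@cnorm_eq0 _ _ C x); apply/eqP.
rewrite eq_le (cnorm_ge0 C) andbT; apply/ler_addgt0Pr => e e_gt0.
by rewrite add0r small.
Qed.

Lemma conjc_i : (('i)^*)%C = - ('i)%C :> R[i].
Proof. by apply/eqP; rewrite eq_complex /= oppr0 !eqxx. Qed.

Lemma star_cartesian_mul x y : self_adjoint C x -> self_adjoint C y ->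
  star (x + 'i%C *: y) * (x + 'i%C *: y) = x * x + y * y.
Proof.
move=> x_sa y_sa; rewrite (cstar_add C) (cstar_scale C) x_sa y_sa conjc_i.
have i2 : ('i * 'i)%C = -1 :> R[i] by rewrite -expr2 sqr_i.
rewrite mulrDl !mulrDr scaleNr !mulNr -!scalerAr -!scalerAl scalerA i2.
by rewrite scaleN1r opprK (mulrC y x) addrA addrK.
Qed.

(* Write [z := x + i y]; then [x = (z^* + z)/2], so [|x| <= |z|] and [|z|^2 = |z^* z| = |x^2 + y^2|]. *)
Lemma cnorm_sqr_le_sum_sqr x y : self_adjoint C x -> self_adjoint C y ->
  nrm x ^+ 2 <= nrm (x * x + y * y).
Proof.
move=> x_sa y_sa; set z := x + 'i%C *: y.
have twice_x : star z + z = rscale 2 x.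
  rewrite /z (cstar_add C) (cstar_scale C) x_sa y_sa conjc_i scaleNr.
  by rewrite addrCA addrNK -[2]/(2%:R) rscale_nat mulr2n.
have x_le_z : nrm x <= nrm z.
  have := cnorm_triangle C (star z) z.
  by rewrite twice_x cnorm_rscale cnorm_star ger0_norm //; lra.
rewrite -star_cartesian_mul // (cnorm_cstar C).
by rewrite lerXn2r // nnegrE (cnorm_ge0 C).
Qed.

Lemma cartesian_decomposition y : exists x w,
  [/\ self_adjoint C x, self_adjoint C w & y = x + 'i%C *: w].
Proof.
exists (rscale 2^-1 (y + star y)), (((2^-1)%:C * - 'i)%C *: (y - star y)); split.
- by rewrite /self_adjoint star_rscale (cstar_add C) (cstarK C) addrC.
- rewrite /self_adjoint (cstar_scale C) starB (cstarK C) -opprB scalerN -scaleNr.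
  congr (_ *: _); apply/eqP; rewrite eq_complex /=.
  by rewrite !(oppr0, mulr0, mul0r, subr0, opprK, mulrN1, mulr1, addr0, mulNr, mulrN) !eqxx.
have i_half : ('i * ((2^-1)%:C * - 'i))%C = (2^-1)%:C%C :> R[i].
  apply/eqP; rewrite eq_complex /=.
  by rewrite !(oppr0, mulr0, mul0r, subr0, opprK, mulrN1, mulr1, addr0, mulNr, mulrN,
    add0r, sub0r, mul1r) !eqxx.
rewrite scalerA i_half -scalerDr addrACA subrr addr0 -[_ *: _]/(rscale _ _).
rewrite -[y + y]mulr2n -rscale_nat.
by rewrite rscaleA mulVf ?pnatr_eq0 // rscale1.
Qed.

Definition cvg_to (t : nat -> A) (l : A) : Prop :=
  forall e : R, 0 < e -> exists N : nat, forall n, (N <= n)%N -> nrm (t n - l) < e.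

Lemma cvg_to_unique t l m : cvg_to t l -> cvg_to t m -> l = m.
Proof.
move=> tl tm; apply/eqP; rewrite -subr_eq0; apply/eqP/cnorm_small_eq0 => e e_gt0.
have e2_gt0 : 0 < e / 2 by rewrite divr_gt0.
have [N1 tN1] := tl _ e2_gt0; have [N2 tN2] := tm _ e2_gt0.
have := cnorm_dist_triangle l (t (maxn N1 N2)) m.
rewrite (cnorm_distC l (t _)).
have := tN1 (maxn N1 N2) (leq_maxl _ _); have := tN2 (maxn N1 N2) (leq_maxr _ _).
lra.
Qed.

Lemma cvg_to_shift t l : cvg_to t l -> cvg_to (fun n => t n.+1) l.
Proof. by move=> tl e /tl [N tN]; exists N => n le_Nn; apply/tN/leqW. Qed.

Lemma cvg_to_lipschitz t l g m (K : R) : 0 <= K ->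
  (forall n, nrm (g n - m) <= K * nrm (t n - l)) -> cvg_to t l -> cvg_to g m.
Proof.
move=> K_ge0 gK tl e e_gt0.
have K1_gt0 : 0 < K + 1 by rewrite ltr_wpDl.
have [N tN] := tl _ (divr_gt0 e_gt0 K1_gt0).
exists N => n le_Nn; apply: le_lt_trans (gK n) _.
have tn := tN n le_Nn; have := cnorm_ge0 C (t n - l).
have : (K + 1) * (e / (K + 1)) = e by rewrite mulrC mulfVK ?gt_eqF.
nra.
Qed.

(* Summing the geometric bounds: [|t (n + j) - t n| (1 - r) <= D (r^n - r^(n + j))]. *)
Lemma geometric_tail t (r D : R) : 0 <= r -> r < 1 ->
  (forall n, nrm (t n.+1 - t n) <= r ^+ n * D) ->
  forall n m, (n <= m)%N -> nrm (t m - t n) <= D / (1 - r) * r ^+ n.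
Proof.
move=> r_ge0 r_lt1 step n m /subnKC <-; set j := (m - n)%N.
have tail : nrm (t (n + j)%N - t n) * (1 - r) <= D * (r ^+ n - r ^+ (n + j)%N).
  elim: j => [|j IHj]; first by rewrite addn0 !subrr cnorm0 mul0r mulr0.
  have := cnorm_dist_triangle (t (n + j.+1)%N) (t (n + j)%N) (t n).
  have := step (n + j)%N; have : 0 <= r ^+ (n + j)%N by rewrite exprn_ge0.
  rewrite addnS exprS; nra.
have : 0 <= r ^+ (n + j)%N by rewrite exprn_ge0.
have D_ge0 : 0 <= D.
  by move: (step 0%N); rewrite expr0 mul1r; apply: le_trans; apply: cnorm_ge0.
rewrite mulrAC ler_pdivlMr ?subr_gt0 //; nra.
Qed.

Lemma geometric_cvg t (r D : R) : 0 <= r -> r < 1 ->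
  (forall n, nrm (t n.+1 - t n) <= r ^+ n * D) -> exists l, cvg_to t l.
Proof.
move=> r_ge0 r_lt1 step; have tail := geometric_tail r_ge0 r_lt1 step.
have K_ge0 : 0 <= D / (1 - r).
  by have := tail 0%N 0%N (leqnn 0); rewrite subrr cnorm0 expr0 mulr1.
apply: (@cnorm_complete _ _ C t) => e e_gt0.
have [N small] := geometric_lt r_ge0 r_lt1 K_ge0 e_gt0.
have rN_le k : (N <= k)%N -> r ^+ k <= r ^+ N by move=> ?; rewrite ler_wiXn2l // ltW.
exists N => m n le_Nm le_Nn; apply: le_lt_trans small.
have [le_nm|lt_mn] := leqP n m.
  by apply: le_trans (tail _ _ le_nm) _; rewrite ler_wpM2l // rN_le.
rewrite cnorm_distC; apply: le_trans (tail _ _ (ltnW lt_mn)) _.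
by rewrite ler_wpM2l // rN_le.
Qed.

Lemma half_sqr_dist u a b :
  nrm (rscale 2^-1 (u + a * a) - rscale 2^-1 (u + b * b))
    <= 2^-1 * (nrm a + nrm b) * nrm (a - b).
Proof.
rewrite -rscaleBr cnorm_rscale ger0_norm ?invr_ge0 // -mulrA ler_pM2l ?invr_gt0 //.
have -> : u + a * a - (u + b * b) = (a + b) * (a - b) by ring.
apply: le_trans (cnorm_mul C _ _) _.
by rewrite ler_wpM2r ?(cnorm_ge0 C) ?(cnorm_triangle C).
Qed.

(* If [l = (u + l^2)/2] then [(1 - l)^2 = 1 - u]; for [|u| <= q < 1] such an [l] is the limit of
   the iteration below, the map being a contraction of ratio [(1 + q)/2] on the ball of that radius. *)
Definition sqrt_iter (u : A) (n : nat) : A := iter n (fun x => rscale 2^-1 (u + x * x)) 0.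

Section SquareRoot.
Variable u : A.
Local Notation t := (sqrt_iter u).

Lemma sqrt_iterS n : t n.+1 = rscale 2^-1 (u + t n * t n).
Proof. by []. Qed.

Lemma sqrt_iter_sa n : self_adjoint C u -> self_adjoint C (t n).
Proof.
move=> u_sa; elim: n => [|n IHn]; first exact: star0.
by rewrite /self_adjoint sqrt_iterS star_rscale (cstar_add C) starM IHn u_sa.
Qed.

Lemma sqrt_iter_le (q : R) n : 0 <= q -> q < 1 -> nrm u <= q -> nrm (t n) <= (1 + q) / 2.
Proof.
move=> q_ge0 q_lt1 u_le; elim: n => [|n IHn]; first by rewrite /sqrt_iter /= cnorm0; lra.
rewrite sqrt_iterS cnorm_rscale ger0_norm ?invr_ge0 //.
have := cnorm_triangle C u (t n * t n); have := cnorm_mul C (t n) (t n).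
have : nrm (t n) * nrm (t n) <= (1 + q) / 2 * ((1 + q) / 2) by rewrite ler_pM ?(cnorm_ge0 C).
have : (1 + q) / 2 * ((1 + q) / 2) <= (1 + q) / 2 by rewrite ler_piMl; lra.
lra.
Qed.

Lemma sqrt_iter_step (q : R) : 0 <= q -> q < 1 -> nrm u <= q ->
  forall n, nrm (t n.+1 - t n) <= ((1 + q) / 2) ^+ n * nrm (t 1).
Proof.
move=> q_ge0 q_lt1 u_le; elim=> [|n IHn].
  by rewrite expr0 mul1r -[t 0]/(0 : A) subr0.
apply: le_trans (half_sqr_dist u (t n.+1) (t n)) _; rewrite exprS.
apply: (le_trans (y := (1 + q) / 2 * nrm (t n.+1 - t n))); last first.
  have r_ge0 : 0 <= (1 + q) / 2 by lra.
  by rewrite -[X in _ <= X]mulrA (ler_wpM2l r_ge0 IHn).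
have mean_le : 2^-1 * (nrm (t n.+1) + nrm (t n)) <= (1 + q) / 2.
  have := sqrt_iter_le n.+1 q_ge0 q_lt1 u_le.
  by have := sqrt_iter_le n q_ge0 q_lt1 u_le; lra.
exact: (ler_wpM2r (cnorm_ge0 C (t n.+1 - t n)) mean_le).
Qed.

Lemma sqrt_one_sub (q : R) : self_adjoint C u -> 0 <= q -> q < 1 -> nrm u <= q ->
  exists s, self_adjoint C s /\ s * s = 1 - u.
Proof.
move=> u_sa q_ge0 q_lt1 u_le.
have [l tl] := geometric_cvg (r := (1 + q) / 2) ltac:(lra) ltac:(lra)
  (sqrt_iter_step q_ge0 q_lt1 u_le).
have l_fix : rscale 2^-1 (u + l * l) = l.
  apply: cvg_to_unique (cvg_to_shift tl).
  apply: (cvg_to_lipschitz (K := 2^-1 * ((1 + q) / 2 + nrm l))) tl => [|n].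
    by have := cnorm_ge0 C l; lra.
  apply: le_trans (half_sqr_dist u (t n) l) _.
  have := sqrt_iter_le n q_ge0 q_lt1 u_le; have := cnorm_ge0 C (t n - l); nra.
have l_sa : star l = l.
  apply: cvg_to_unique (cvg_to_lipschitz (K := 1) ler01 _ tl) tl => n.
  by rewrite mul1r -{1}(sqrt_iter_sa n u_sa) -starB cnorm_star.
exists (1 - l); split; first by rewrite /self_adjoint starB star1 l_sa.
have twice_l : l + l = u + l * l.
  have halves : 2^-1 + 2^-1 = 1 :> R by lra.
  by rewrite -{1 2}l_fix -rscaleDl halves rscale1.
have -> : (1 - l) * (1 - l) = 1 - (l + l) + l * l by ring.
by rewrite twice_l; ring.
Qed.

End SquareRoot.

(* For self-adjoint [h] this says that the spectrum of [h] lies in [[0, 2T]]; unlike [positive],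
   it is visibly closed under sums. *)
Definition norm_positive (h : A) : Prop :=
  self_adjoint C h /\ exists T : R, nrm (rscale T 1 - h) <= T.

Lemma norm_positiveD h1 h2 :
  norm_positive h1 -> norm_positive h2 -> norm_positive (h1 + h2).
Proof.
move=> [h1_sa [T1 le1]] [h2_sa [T2 le2]]; split.
  by rewrite /self_adjoint (cstar_add C) h1_sa h2_sa.
exists (T1 + T2).
have -> : rscale (T1 + T2) 1 - (h1 + h2) = (rscale T1 1 - h1) + (rscale T2 1 - h2).
  by rewrite rscaleDl; ring.
by apply: le_trans (cnorm_triangle C _ _) _; rewrite lerD.
Qed.

(* With [1 - h^2 = s^2], [|s|^2 <= |s^2 + h^2| = |1| <= 1]. *)
Lemma cnorm_one_sub_sqr h : self_adjoint C h -> nrm h < 1 -> nrm (1 - h * h) <= 1.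
Proof.
move=> h_sa h_lt1; have h_ge0 := cnorm_ge0 C h.
have hh_sa : self_adjoint C (h * h) by rewrite /self_adjoint starM h_sa.
have hh_lt1 : nrm h * nrm h < 1 by rewrite -[1]mulr1 ltr_pM.
have [s [s_sa ss]] := sqrt_one_sub hh_sa (mulr_ge0 h_ge0 h_ge0) hh_lt1 (cnorm_mul C h h).
have := cnorm_sqr_le_sum_sqr s_sa h_sa; rewrite ss subrK => s_le.
rewrite -ss; apply: le_trans (cnorm_mul C s s) _.
by rewrite -expr2 (le_trans s_le) ?cnorm1_le1.
Qed.

Lemma norm_positive_sqr h : self_adjoint C h -> norm_positive (h * h).
Proof.
move=> h_sa; split; first by rewrite /self_adjoint starM h_sa.
have h_lt := archi_boundP (cnorm_ge0 C h); set M : R := (Num.bound _)%:R in h_lt.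
have M_gt0 : 0 < M by apply: le_lt_trans h_lt; apply: cnorm_ge0.
set h' := rscale M^-1 h.
have h'_sa : self_adjoint C h' by rewrite /self_adjoint star_rscale h_sa.
have h'_lt1 : nrm h' < 1.
  by rewrite cnorm_rscale ger0_norm ?invr_ge0 ?(ltW M_gt0) // mulrC ltr_pdivrMr // mul1r.
exists (M * M).
have -> : rscale (M * M) 1 - h * h = rscale (M * M) (1 - h' * h').
  by rewrite rscaleBr rscaleMM rscaleA mulrACA mulfV ?gt_eqF // mulr1 !rscale1.
have MM_ge0 : 0 <= M * M by rewrite mulr_ge0 // ltW.
by rewrite cnorm_rscale ger0_norm // ler_piMr // cnorm_one_sub_sqr.
Qed.

Lemma norm_positive_star_mul y : norm_positive (star y * y).
Proof.
have [x [w [x_sa w_sa ->]]] := cartesian_decomposition y.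
by rewrite star_cartesian_mul //; apply: norm_positiveD; apply: norm_positive_sqr.
Qed.

Lemma cnorm_scalar_sub_mono h (T T' : R) :
  nrm (rscale T 1 - h) <= T -> T <= T' -> nrm (rscale T' 1 - h) <= T'.
Proof.
move=> le_T le_TT'.
have -> : rscale T' 1 - h = (rscale T 1 - h) + rscale (T' - T) 1.
  by rewrite addrAC -rscaleDl subrKC.
apply: le_trans (cnorm_triangle C _ _) _.
have := cnorm_rscale1 (T' - T); rewrite ger0_norm ?subr_ge0 //; lra.
Qed.

(* Writing [h + e = (T + e) (1 - u)], the bound [|T - h| <= T] gives [|u| <= T / (T + e) < 1]. *)
Lemma add_scalar_eq_sqr h (T e : R) : self_adjoint C h -> nrm (rscale T 1 - h) <= T -> 0 < e ->
  exists v, self_adjoint C v /\ rscale (T + e) (v * v) = h + rscale e 1.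
Proof.
move=> h_sa le_T e_gt0; have T_ge0 : 0 <= T by apply: le_trans le_T; apply: cnorm_ge0.
set S := T + e; have S_gt0 : 0 < S by rewrite /S; lra.
set u := 1 - rscale S^-1 (h + rscale e 1).
have u_sa : self_adjoint C u.
  by rewrite /self_adjoint starB star1 star_rscale (cstar_add C) star_rscale star1 h_sa.
have Su : rscale S u = rscale T 1 - h.
  rewrite /u rscaleBr rscaleKV ?gt_eqF // /S rscaleDl; ring.
have u_le : nrm u <= T / S.
  by rewrite ler_pdivlMr // mulrC -(ger0_norm (ltW S_gt0)) -cnorm_rscale Su.
have [v [v_sa vv]] := sqrt_one_sub u_sa (divr_ge0 T_ge0 (ltW S_gt0))
  ltac:(rewrite ltr_pdivrMr // mul1r /S; lra) u_le.
exists v; split => //.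
by rewrite vv /u opprB addrC subrK rscaleKV ?gt_eqF.
Qed.

(* For [h >= 0 >= h] and any [e > 0], [h + e] and [e - h] are [(T + e) v^2] and [(T + e) w^2],
   so [v^2 + w^2 = 2e / (T + e)] forces [|h + e| <= (T + e) |v|^2 <= 2e]. *)
Lemma norm_positive_anti h : norm_positive h -> norm_positive (- h) -> h = 0.
Proof.
move=> [h_sa [T1 le1]] [Nh_sa [T2 le2]].
have T1_ge0 : 0 <= T1 by apply: le_trans le1; apply: cnorm_ge0.
have T2_ge0 : 0 <= T2 by apply: le_trans le2; apply: cnorm_ge0.
set T := T1 + T2.
have leT1 : nrm (rscale T 1 - h) <= T by apply: cnorm_scalar_sub_mono le1 _; rewrite /T; lra.
have leT2 : nrm (rscale T 1 - - h) <= T by apply: cnorm_scalar_sub_mono le2 _; rewrite /T; lra.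
apply: cnorm_small_eq0 => e' e'_gt0; set e := e' / 3.
have e_gt0 : 0 < e by rewrite divr_gt0.
have [v [v_sa vv]] := add_scalar_eq_sqr h_sa leT1 e_gt0.
have [w [w_sa ww]] := add_scalar_eq_sqr Nh_sa leT2 e_gt0.
set S := T + e in vv ww; have S_gt0 : 0 < S by rewrite /S /T; lra.
have unscale x y : rscale S x = y -> x = rscale S^-1 y.
  by move=> <-; rewrite rscaleA mulVf ?gt_eqF ?rscale1.
have sum_sqr : v * v + w * w = rscale (S^-1 * (e + e)) 1.
  rewrite (unscale _ _ vv) (unscale _ _ ww) -rscaleDr -(rscaleA S^-1) (rscaleDl e).
  by congr (rscale _ _); ring.
have v_le : nrm v ^+ 2 <= S^-1 * (e + e).
  have c_ge0 : 0 <= S^-1 * (e + e) by rewrite mulr_ge0 // ?invr_ge0 ?addr_ge0 // ltW.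
  apply: le_trans (cnorm_sqr_le_sum_sqr v_sa w_sa) _; rewrite sum_sqr.
  by have := cnorm_rscale1 (S^-1 * (e + e)); rewrite ger0_norm.
have he_le : nrm (h + rscale e 1) <= e + e.
  rewrite -vv cnorm_rscale ger0_norm; last exact: ltW.
  have vv_le : nrm (v * v) <= S^-1 * (e + e).
    by apply: le_trans (cnorm_mul C v v) _; rewrite -expr2.
  have := ler_wpM2l (ltW S_gt0) vv_le.
  by rewrite mulrA mulfV ?gt_eqF // mul1r.
have := cnorm_triangle C (h + rscale e 1) (- rscale e 1); rewrite addrK cnormN.
have e'_eq : e' = e + e + e by rewrite /e; lra.
by have := cnorm_rscale1 e; rewrite ger0_norm; [lra | exact: ltW].
Qed.

Lemma positive_anti a : positive C a -> positive C (- a) -> a = 0.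
Proof.
move=> [x ->] [y Nxx]; apply: norm_positive_anti; first exact: norm_positive_star_mul.
by rewrite Nxx; exact: norm_positive_star_mul.
Qed.

Lemma positiveM a b : positive C a -> positive C b -> positive C (a * b).
Proof. by move=> [x ->] [y ->]; exists (x * y); rewrite starM mulrACA. Qed.

Lemma projection_positive p : projection C p -> positive C p.
Proof. by move=> [pp p_sa]; exists p; rewrite p_sa pp. Qed.

Lemma projection_le p p' : projection C p -> projection C p' -> p' = p' * p -> cle C p' p.
Proof.
move=> [pp p_sa] [pp' p'_sa] p'p; exists (p - p').
rewrite starB p_sa p'_sa.
have -> : (p - p') * (p - p') = p * p - p' * p - p' * p + p' * p' by ring.
by rewrite pp pp' -p'p subrK.
Qed.

(* [b / m^2 = 1 - s^2] with [m > |b|], so [m^2 - b = (m s)^2]. *)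
Lemma positive_le_nat b : positive C b -> exists n : nat, cle C b (1 *+ n).
Proof.
move=> [y b_def].
have b_sa : self_adjoint C b by rewrite /self_adjoint b_def starM (cstarK C) mulrC.
have b_ge0 := cnorm_ge0 C b.
have b_lt := archi_boundP b_ge0; set m := Num.bound _ in b_lt.
have m_ge1 : (1 <= m)%N by case: m b_lt => // /lt_le_trans /(_ b_ge0); rewrite ltxx.
set M : R := (m * m)%N%:R.
have b_ltM : nrm b < M by apply: lt_le_trans b_lt _; rewrite ler_nat leq_pmull.
have M_gt0 : 0 < M by apply: le_lt_trans b_ltM.
set u := rscale M^-1 b.
have u_sa : self_adjoint C u by rewrite /self_adjoint star_rscale b_sa.
have u_le : nrm u <= nrm b / M.
  by rewrite cnorm_rscale ger0_norm ?invr_ge0 ?(ltW M_gt0) // mulrC.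
have [s [s_sa ss]] := sqrt_one_sub u_sa (divr_ge0 b_ge0 (ltW M_gt0))
  ltac:(by rewrite ltr_pdivrMr // mul1r) u_le.
exists (m * m)%N; exists (rscale m%:R s).
rewrite star_rscale s_sa rscaleMM -natrM ss rscaleBr rscaleKV ?gt_eqF //.
by rewrite rscale_nat.
Qed.

Lemma positive0 : positive C 0.
Proof. by exists 0; rewrite mulr0. Qed.

Lemma rickart_zero_proj a : rickart C -> exists p, zero_proj C a p.
Proof.
move=> /(_ a) [p [[pp p_sa] ann]]; exists p; split=> //; split.
  by apply/ann; exists 1; rewrite mulr1.
by move=> b /ann [z ->]; rewrite -mulrA (mulrC z) mulrA pp.
Qed.

(* From [a <= n a'] and [a' p' = 0] we get [0 <= a p' <= 0], hence [p' = p' p]. *)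
Lemma zero_proj_antitone a a' p p' : positive C a ->
  zero_proj C a p -> zero_proj C a' p' -> prec C a a' -> prec C p' p.
Proof.
move=> a_pos [p_proj [_ ann_p]] [p'_proj [a'p' _]] [n a_le].
have ap' : a * p' = 0.
  apply: positive_anti; first by apply: positiveM a_pos (projection_positive p'_proj).
  have -> : - (a * p') = (a' *+ n - a) * p' by rewrite mulrBl mulrnAl a'p' mul0rn sub0r.
  exact: positiveM a_le (projection_positive p'_proj).
by exists 1%N; rewrite mulr1n; apply: projection_le p_proj p'_proj (ann_p _ ap').
Qed.

Lemma zero_proj_pseudocomplement a p b : positive C a -> zero_proj C a p -> positive C b ->
  (prec C (b * a) 0 /\ prec C 0 (b * a)) <-> prec C b p.
Proof.
move=> a_pos [p_proj [ap ann_p]] b_pos; have p_pos := projection_positive p_proj.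
split=> [[[n ba_le] _]|[n b_le]].
  have ba0 : b * a = 0.
    by apply: positive_anti; [exact: positiveM | rewrite -sub0r -(mul0rn _ n)].
  have bp : b = p * b by rewrite mulrC; apply: ann_p; rewrite mulrC.
  have [k b_le] := positive_le_nat b_pos; exists k; rewrite /cle.
  have -> : p *+ k - b = p * (1 *+ k - b) by rewrite mulrBr -bp mulrnAr mulr1.
  exact: positiveM.
split; last by exists 0%N; rewrite /cle mulr0n subrr; exact: positive0.
exists 0%N; rewrite /cle mul0rn sub0r.
have -> : - (b * a) = (p *+ n - b) * a by rewrite mulrBl mulrnAl (mulrC p) ap mul0rn sub0r.
exact: positiveM.
Qed.

End CStar.

Theorem proposition14 (R : realType) (A : comAlgType R[i]) (C : comCStarAlg A) :
  rickart C ->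
  (forall a : A, positive C a -> exists p : A, zero_proj C a p) /\
  (forall a p : A, positive C a -> zero_proj C a p -> positive C p) /\
  (forall a a' p p' : A, positive C a -> positive C a' ->
     zero_proj C a p -> zero_proj C a' p' ->
     prec C a a' -> prec C p' p) /\
  (forall a p b : A, positive C a -> zero_proj C a p -> positive C b ->
     ((prec C (b * a) 0 /\ prec C 0 (b * a)) <-> prec C b p)).
Proof.
move=> rickartA; split; first by move=> a _; exact: rickart_zero_proj.
split; first by move=> a p _ [p_proj _]; exact: projection_positive.
split; first by move=> a a' p p' a_pos _; exact: zero_proj_antitone.
exact: zero_proj_pseudocomplement.
Qed.
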